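(* For an affine lattice ${\mathcal L}\subset\mathbb{R}^n$ write ${\mathcal L}_0={\mathcal L}-{\mathcal L}$ for the lattice of which it is a translate. Let $g\in G$. Then $(\mathbb{Z}^ng)_0\cap(\{{\bf 0}\}\times\mathbb{R}^m)\subset(\mathbb{Z}^nhg)_0\cap(\{{\bf 0}\}\times\mathbb{R}^m)$ for all $h\in H_g$, and these two sets are equal for almost all $h\in H_g$ (with respect to Haar measure on $H_g$).
   Context: $n=d+m$, $\mathbb{R}^n=\mathbb{R}^d\times\mathbb{R}^m$. $G=\operatorname{ASL}(n,\mathbb{R})$ with $(M,{\boldsymbol\xi})(M',{\boldsymbol\xi}')=(MM',{\boldsymbol\xi}M'+{\boldsymbol\xi}')$, acting on row vectors by ${\boldsymbol y}\mapsto{\boldsymbol y}M+{\boldsymbol\xi}$; $\Gamma=\operatorname{ASL}(n,\mathbb{Z})$. $\varphi_g(A,{\boldsymbol x})=g\bigl(\operatorname{diag}(A,1_m),({\boldsymbol x},{\bf 0})\bigr)g^{-1}$ for $(A,{\boldsymbol x})\in\operatorname{ASL}(d,\mathbb{R})$. $H_g$ is the unique closed connected subgroup of $G$ such that $\Gamma\cap H_g$ is a lattice in $H_g$, $\varphi_g(\operatorname{SL}(d,\mathbb{R}))\subset H_g$, and the closure of $\Gamma\backslash\Gamma\varphi_g(\operatorname{SL}(d,\mathbb{R}))$ in $\Gamma\backslash G$ is $\Gamma\backslash\Gamma H_g$. *)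

From HB Require Import structures.
From mathcomp Require Import all_boot all_order all_algebra.
From mathcomp Require Import all_classical all_reals all_analysis.
Set Implicit Arguments. Unset Strict Implicit. Unset Printing Implicit Defensive.
Import Order.TTheory GRing.Theory Num.Theory.
Import numFieldNormedType.Exports.
Local Open Scope classical_set_scope.
Local Open Scope ring_scope.

(* ambient space containing G = ASL(n,R), n = d + m:
   pairs (M, xi) with M an n x n matrix and xi a row vector *)
Notation Amb R d m := ('M[R]_(d + m) * 'rV[R]_(d + m))%type.

Notation BorelA R d m := (g_sigma_algebraType (@open (Amb R d m))).

Section ASL.
Variables (R : realType) (d m : nat).

Definition aslmul (g h : Amb R d m) : Amb R d m := (g.1 *m h.1, g.2 *m h.1 + h.2).
Definition aslone : Amb R d m := (1%:M, 0).
Definition aslinv (g : Amb R d m) : Amb R d m := (invmx g.1, - (g.2 *m invmx g.1)).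

Definition inG : set (Amb R d m) := [set g : Amb R d m | \det g.1 = 1].

Definition Gamma : set (Amb R d m) :=
  [set g : Amb R d m | \det g.1 = 1 /\ (forall i j, g.1 i j \is a Num.int)
           /\ (forall j : 'I_(d + m), g.2 ord0 j \is a Num.int)].

Definition actA (y : 'rV[R]_(d + m)) (g : Amb R d m) : 'rV[R]_(d + m) :=
  y *m g.1 + g.2.

Definition Zn : set 'rV[R]_(d + m) := [set y | forall j : 'I_(d + m), y ord0 j \is a Num.int].

Definition Zng (g : Amb R d m) : set 'rV[R]_(d + m) := [set actA y g | y in Zn].

Definition lat0 (L : set 'rV[R]_(d + m)) : set 'rV[R]_(d + m) :=
  [set a - b | a in L & b in L].

Definition zeroRm : set 'rV[R]_(d + m) :=
  [set v | forall i : 'I_(d + m), (i < d)%N -> v ord0 i = 0].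

Definition phiSL (g : Amb R d m) : set (Amb R d m) :=
  [set aslmul (aslmul g (block_mx A 0 0 1%:M, 0)) (aslinv g)
    | A in [set A : 'M[R]_d | \det A = 1]].

Definition setmulA (S T : set (Amb R d m)) : set (Amb R d m) :=
  [set aslmul x.1 x.2 | x in S `*` T].

Definition is_subgroupG (H : set (Amb R d m)) : Prop :=
  H `<=` inG /\ H aslone /\ (forall x y, H x -> H y -> H (aslmul x y))
  /\ (forall x, H x -> H (aslinv x)).


(* left (resp. right) Haar measure on the closed subgroup H, realized as a
   Borel measure on the ambient space concentrated on H *)
Definition is_left_haar (H : set (Amb R d m))
  (mu : {measure set (BorelA R d m) -> \bar R}) : Prop :=
  mu (~` H) = 0%E /\
  (forall h (E : set (BorelA R d m)), H h -> measurable E ->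
      mu (aslmul h @` E) = mu E) /\
  (forall K : set (Amb R d m), compact K -> (mu K < +oo)%E) /\
  (0 < mu H)%E.

Definition is_right_haar (H : set (Amb R d m))
  (mu : {measure set (BorelA R d m) -> \bar R}) : Prop :=
  mu (~` H) = 0%E /\
  (forall h (E : set (BorelA R d m)), H h -> measurable E ->
      mu ((fun x => aslmul x h) @` E) = mu E) /\
  (forall K : set (Amb R d m), compact K -> (mu K < +oo)%E) /\
  (0 < mu H)%E.

(* Gamma /\ H is a lattice in H: Gamma \cap H \ H has finite invariant
   volume, i.e. some Borel fundamental domain for the left action of
   Gamma \cap H on H has finite right Haar measure *)
Definition lattice_in (Gam H : set (Amb R d m)) : Prop :=
  exists (mu : {measure set (BorelA R d m) -> \bar R}) (F : set (BorelA R d m)),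
    is_right_haar H mu /\ measurable F /\ F `<=` H /\
    (forall h, H h -> exists gam, (Gam `&` H) gam /\ F (aslmul (aslinv gam) h)) /\
    (forall h gam gam', H h -> (Gam `&` H) gam -> (Gam `&` H) gam' ->
        F (aslmul (aslinv gam) h) -> F (aslmul (aslinv gam') h) -> gam = gam') /\
    (mu F < +oo)%E.

Definition is_Hg (g : Amb R d m) (H : set (Amb R d m)) : Prop :=
  is_subgroupG H /\ closed H /\ connected H /\
  lattice_in Gamma H /\ phiSL g `<=` H /\
  closure (setmulA Gamma (phiSL g)) = setmulA Gamma H.

End ASL.

From HB Require Import structures.
From mathcomp Require Import all_boot all_order all_algebra.
From mathcomp Require Import all_classical all_reals all_analysis.
From mathcomp Require Import zify finmap.
From mathcomp.algebra_tactics Require Import ring.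
Import Order.TTheory GRing.Theory Num.Theory.
Import numFieldNormedType.Exports.
Local Open Scope classical_set_scope.
Local Open Scope ring_scope.
Set Implicit Arguments. Unset Strict Implicit. Unset Printing Implicit Defensive.

(* Let S_g be the set of x with det x = 1 such that w adj(x) is integral for every
   integral w with w g ∈ {0} × R^m. It is closed and contains Γ φ_g(SL(d,R)), because
   φ_g(A) fixes every vector of {0} × R^m; so it contains the closure Γ H_g of that
   set, hence H_g. For h ∈ S_g every w g ∈ {0} × R^m equals (w adj(h)) h g, which
   gives the inclusion.

   If the inclusion is strict at h ∈ H_g, some integral w has w h g ∈ {0} × R^m but
   w g ∉ {0} × R^m (otherwise the inclusion for h^-1 gives equality), so h lies in
   H_g ∩ E_w for the linear space E_w = {M | w M g ∈ {0} × R^m}, which does not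
   contain 1. It thus suffices that a linear space E of matrices with H ∩ E of
   positive Haar measure contains H. Take such E of minimal dimension. For x ∈ H the
   translate x^-1 (H ∩ E) = H ∩ x^-1 E has the same measure, and by minimality two
   such translates meet in a null set unless x^-1 E = y^-1 E. If some x^-1 E differed
   from E, the squared distance from a fixed vector of E to x^-1 E would be a
   continuous function on the connected group H with two distinct values, hence with
   uncountably many; this gives uncountably many almost disjoint sets of positive
   measure, impossible for a σ-finite measure. So x^-1 E = E for x ∈ H, and since E
   contains some y ∈ H it contains 1 = y^-1 y and then every x = x 1. *)

Section MxContinuous.
Variables (R : realType) (T : topologicalType).

Definition mx_continuous p q (X : T -> 'M[R]_(p, q)) :=
  forall i j, continuous (fun t => X t i j).

Lemma continuous_sumr (I : Type) (r : seq I) (P : pred I) (F : I -> T -> R) :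
  (forall i, continuous (F i)) -> continuous (fun t => \sum_(i <- r | P i) F i t).
Proof.
move=> cF; elim: r => [|a r IH].
  by under eq_fun do rewrite big_nil; apply: cst_continuous.
under eq_fun do rewrite big_cons.
by case: (P a) => // x; exact: (continuousD (cF a x) (IH x)).
Qed.

Lemma continuous_prodr (I : Type) (r : seq I) (P : pred I) (F : I -> T -> R) :
  (forall i, continuous (F i)) -> continuous (fun t => \prod_(i <- r | P i) F i t).
Proof.
move=> cF; elim: r => [|a r IH].
  by under eq_fun do rewrite big_nil; apply: cst_continuous.
under eq_fun do rewrite big_cons.
by case: (P a) => // x; exact: (continuousM (cF a x) (IH x)).
Qed.

Lemma mx_continuous_cst p q (A : 'M[R]_(p, q)) : mx_continuous (fun=> A).
Proof. by move=> i j x; apply: cst_continuous. Qed.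

Lemma mx_continuous_mul p q r (X : T -> 'M[R]_(p, q)) (Y : T -> 'M[R]_(q, r)) :
  mx_continuous X -> mx_continuous Y -> mx_continuous (fun t => X t *m Y t).
Proof.
move=> cX cY i j; under eq_fun do rewrite mxE.
by apply: continuous_sumr => k x; exact: (continuousM (cX i k x) (cY k j x)).
Qed.

Lemma continuous_det p (X : T -> 'M[R]_p) :
  mx_continuous X -> continuous (fun t => \det (X t)).
Proof.
move=> cX; apply: continuous_sumr => s x /=.
apply: (@continuousM R T (fun=> _)); first exact: cst_continuous.
by apply: continuous_prodr => i; apply: cX.
Qed.

Lemma mx_continuous_adj p (X : T -> 'M[R]_p) :
  mx_continuous X -> mx_continuous (fun t => \adj (X t)).
Proof.
move=> cX i j; under eq_fun do rewrite mxE /cofactor.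
have cminor : mx_continuous (fun t => row' j (col' i (X t))).
  by move=> a b; under eq_fun do rewrite !mxE; apply: cX.
move=> x; apply: (@continuousM R T (fun=> _)); first exact: cst_continuous.
exact: continuous_det cminor x.
Qed.

Lemma mx_continuous_tr p q (X : T -> 'M[R]_(p, q)) :
  mx_continuous X -> mx_continuous (fun t => (X t)^T).
Proof. by move=> cX i j; under eq_fun do rewrite mxE; apply: cX. Qed.

Lemma mx_continuous_col p1 p2 q (X : T -> 'M[R]_(p1, q)) (Y : T -> 'M[R]_(p2, q)) :
  mx_continuous X -> mx_continuous Y -> mx_continuous (fun t => col_mx (X t) (Y t)).
Proof.
move=> cX cY i j; case: (splitP i) => k ik.
  have -> : i = lshift _ k by apply/val_inj.
  by under eq_fun do rewrite col_mxEu; apply: cX.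
have -> : i = rshift _ k by apply/val_inj.
by under eq_fun do rewrite col_mxEd; apply: cY.
Qed.

Lemma mx_continuous_mxvec p q (X : T -> 'M[R]_(p, q)) :
  mx_continuous X -> mx_continuous (fun t => mxvec (X t)).
Proof.
move=> cX i j; rewrite ord1; case/mxvec_indexP: j => a b.
by under eq_fun do rewrite mxvecE; apply: cX.
Qed.

End MxContinuous.

Lemma mx_continuous_fst (R : realType) p q r s :
  mx_continuous (fun x : 'M[R]_(p, q) * 'M[R]_(r, s) => x.1).
Proof.
move=> i j x; apply: (@continuous_comp _ _ _ fst (fun M : 'M[R]_(p, q) => M i j)).
  exact: cvg_fst.
exact: coord_continuous.
Qed.

Lemma closed_int (R : realType) : closed [set x : R | x \is a Num.int].
Proof.
rewrite -[X in closed X]setCK; apply: open_closedC; move=> x /= xZ.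
set z := Num.floor x.
have zx : z%:~R < x.
  rewrite lt_neqAle floor_le andbT; apply/negP => /eqP zx.
  by apply: xZ; rewrite -zx rpred_int.
have xz1 : x < (z + 1)%:~R by apply: floorD1_gt.
pose e := Num.min (x - z%:~R) ((z + 1)%:~R - x).
have e0 : 0 < e by rewrite lt_min !subr_gt0 zx xz1.
apply/nbhs_ballP; exists e => // y; rewrite /ball /= => + yZ.
have [k ->] : exists k : int, y = k%:~R by exists (Num.floor y); rewrite floorK.
have [kz|zk] := lerP k z.
  have kx : k%:~R <= x by apply: le_trans (ltW zx); rewrite ler_int.
  rewrite ger0_norm ?subr_ge0 // ltNge => /negP; apply.
  by rewrite ge_min lerD2l lerN2 ler_int kz.
have xk : x <= k%:~R by apply: le_trans (ltW xz1) _; rewrite ler_int; lia.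
rewrite distrC ger0_norm ?subr_ge0 // ltNge => /negP; apply.
by rewrite ge_min lerD2r ler_int; apply/orP; right; lia.
Qed.

Section IntegerMatrices.
Variable R : archiNumDomainType.

Lemma int_mulmx p q r (A : 'M[R]_(p, q)) (B : 'M[R]_(q, r)) :
  (forall i j, A i j \is a Num.int) -> (forall i j, B i j \is a Num.int) ->
  forall i j, (A *m B) i j \is a Num.int.
Proof. by move=> ZA ZB i j; rewrite mxE rpred_sum // => k _; apply: rpredM. Qed.

Lemma int_det p (A : 'M[R]_p) : (forall i j, A i j \is a Num.int) -> \det A \is a Num.int.
Proof.
move=> ZA; apply: rpred_sum => s _; rewrite rpredM ?rpred_sign //.
by apply: rpred_prod => i _.
Qed.

Lemma int_adj p (A : 'M[R]_p) : (forall i j, A i j \is a Num.int) ->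
  forall i j, \adj A i j \is a Num.int.
Proof.
move=> ZA i j; rewrite mxE /cofactor rpredM ?rpred_sign //.
by apply: int_det => a b; rewrite !mxE.
Qed.

End IntegerMatrices.

Lemma unitmx_det1 (R : fieldType) p (A : 'M[R]_p) : \det A = 1 -> A \in unitmx.
Proof. by move=> dA; rewrite unitmxE dA unitr1. Qed.

Lemma adj_det1 (R : fieldType) p (A : 'M[R]_p) : \det A = 1 -> \adj A = invmx A.
Proof. by move=> dA; rewrite /invmx unitmx_det1 // dA invr1 scale1r. Qed.

Section LinMulmx.
Variables (F : fieldType) (n : nat).
Implicit Types X Y M : 'M[F]_n.
Local Notation lmx X := (lin_mulmx (p := n) X).

Lemma mul_vec_lin_mulmx X M : mxvec M *m lin_mulmx X = mxvec (X *m M).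
Proof. exact: mul_vec_lin. Qed.

Lemma lin_mulmxM X Y : lmx X *m lmx Y = lmx (Y *m X).
Proof.
apply/eqP/mulmxP => u; rewrite -[u]vec_mxK mulmxA !mul_vec_lin_mulmx.
by rewrite mulmxA.
Qed.

Lemma lin_mulmx1 : lmx (1%:M : 'M[F]_n) = 1%:M.
Proof.
by apply/eqP/mulmxP => u; rewrite -[u]vec_mxK mul_vec_lin_mulmx mul1mx mulmx1.
Qed.

Lemma lin_mulmx_unit X : X \in unitmx -> lmx X \in unitmx.
Proof.
move=> uX; rewrite -row_free_unit; apply/row_freeP.
by exists (lmx (invmx X)); rewrite lin_mulmxM mulVmx // lin_mulmx1.
Qed.

Lemma submx_lin_mulmxV k (S : 'M[F]_(k, n * n)) X M : X \in unitmx ->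
  (mxvec M <= S *m lmx (invmx X))%MS = (mxvec (X *m M) <= S)%MS.
Proof.
move=> uX; have fV : row_free (lmx (invmx X)).
  by rewrite row_free_unit lin_mulmx_unit ?unitmx_inv.
by rewrite -[RHS](submxMfree _ _ fV) mul_vec_lin_mulmx mulKmx.
Qed.

Lemma mxrank_lin_mulmxV k (S : 'M[F]_(k, n * n)) X : X \in unitmx ->
  \rank (S *m lmx (invmx X)) = \rank S.
Proof. by move=> uX; rewrite mxrankMfree // row_free_unit lin_mulmx_unit ?unitmx_inv. Qed.

End LinMulmx.

Lemma mx_continuous_lin_mulmx (R : realType) (T : topologicalType) n
  (X : T -> 'M[R]_n) : mx_continuous X -> mx_continuous (fun t => lin_mulmx (p := n) (X t)).
Proof.
move=> cX i j; rewrite /lin_mulmx /lin_mx /lin1_mx.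
under eq_fun do rewrite mxE /=.
have := mx_continuous_mul cX (mx_continuous_cst (A := vec_mx (delta_mx 0 i))).
by move/mx_continuous_mxvec; apply.
Qed.

Lemma capmx_rank_sub (F : fieldType) m1 m2 n (A : 'M[F]_(m1, n)) (B : 'M[F]_(m2, n)) :
  (\rank A <= \rank (A :&: B))%N -> (A <= B)%MS.
Proof.
move=> rAB; apply: submx_trans (capmxSr A B).
by rewrite -(mxrank_leqif_sup (capmxSl A B)).2 eqn_leq rAB mxrankS ?capmxSl.
Qed.

Section Gram.
Variables (R : realFieldType) (N : nat).

Lemma row_sqnorm_eq0 (u : 'rV[R]_N) : (u *m u^T) 0 0 = 0 -> u = 0.
Proof.
rewrite mxE => u0; apply/rowP => j; rewrite mxE.
have u2_ge0 (i : 'I_N) : true -> 0 <= u 0 i * u^T i 0.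
  by move=> _; rewrite mxE -expr2 sqr_ge0.
have := @psumr_eq0P _ _ xpredT _ u2_ge0 u0 j isT.
by rewrite mxE => /eqP; rewrite mulf_eq0 orbb => /eqP.
Qed.

Lemma gram_unitmx k (M : 'M[R]_(k, N)) : row_free M -> M *m M^T \in unitmx.
Proof.
move=> fM; rewrite -row_free_unit; apply: inj_row_free => u uM0.
have : (u *m M) *m (u *m M)^T = 0 by rewrite trmx_mul !mulmxA -(mulmxA u) uM0 mul0mx.
move=> /matrixP /(_ 0 0); rewrite [RHS]mxE => /row_sqnorm_eq0 uM.
by apply: (row_free_inj fM); rewrite uM mul0mx.
Qed.

Lemma det_gram_eq0 k (M : 'M[R]_(k, N)) : (\det (M *m M^T) == 0) = ~~ row_free M.
Proof.
apply/idP/idP => [/eqP d0|nfM]; last first.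
  apply: contraNT nfM => dM; have uM : M *m M^T \in unitmx by rewrite unitmxE unitfE.
  have := mxrankM_maxl M M^T; rewrite mxrank_unit // => rM.
  by rewrite /row_free eqn_leq rM rank_leq_row.
by apply/negP => /gram_unitmx; rewrite unitmxE d0 unitr0.
Qed.

Lemma row_free_col_mx k (C : 'M[R]_(k, N)) (v : 'rV[R]_N) :
  row_free C -> row_free (col_mx C v) = ~~ (v <= C)%MS.
Proof.
move=> fC; apply/idP/idP => [fCv|nvC].
  apply/negP => /submxP[D vE].
  have := row_free_inj fCv (x1 := row_mx D (-1%:M)) (x2 := 0).
  rewrite mul_row_col mul0mx mulNmx mul1mx vE subrr => /(_ erefl) /eqP.
  rewrite -row_mx0 => /eqP /eq_row_mx [_ /matrixP /(_ 0 0)].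
  by rewrite !mxE /= => /eqP; rewrite oppr_eq0 oner_eq0.
apply: inj_row_free => u; rewrite -[u]hsubmxK mul_row_col.
set a := rsubmx u; set b := lsubmx u => abCv.
have [a00|a00] := eqVneq (a 0 0) 0.
  have a0 : a = 0 by apply/rowP => i; rewrite ord1 a00 mxE.
  rewrite a0 mul0mx addr0 in abCv.
  have b0 : b = 0 by apply: (row_free_inj fC); rewrite abCv mul0mx.
  by rewrite a0 b0 row_mx0.
case/negP: nvC; have -> : v = - (a 0 0)^-1 *: (b *m C).
  rewrite (mx11_scalar a) mul_scalar_mx in abCv.
  have av : a 0 0 *: v = - (b *m C) by apply/eqP; rewrite -addr_eq0 addrC abCv.
  by rewrite scaleNr -scalerN -av scalerA mulVf // scale1r.
by apply: scalemx_sub; apply: submxMl.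
Qed.

(* For row-free [C], the squared distance from [v] to the row space of [C]. *)
Definition sqdist_rowspace k (C : 'M[R]_(k, N)) (v : 'rV[R]_N) :=
  \det (col_mx C v *m (col_mx C v)^T) / \det (C *m C^T).

Lemma sqdist_rowspace_eq0 k (C : 'M[R]_(k, N)) v : row_free C ->
  (sqdist_rowspace C v == 0) = (v <= C)%MS.
Proof.
move=> fC; rewrite /sqdist_rowspace mulf_eq0 invr_eq0 !det_gram_eq0 fC orbF.
by rewrite row_free_col_mx // negbK.
Qed.

Lemma eqmx_sqdist_rowspace k (C C' : 'M[R]_(k, N)) v : row_free C -> row_free C' ->
  (C == C')%MS -> sqdist_rowspace C v = sqdist_rowspace C' v.
Proof.
move=> fC fC' /andP[_ sC'C].
set A := C' *m pinvmx C.
have C'E : C' = A *m C by rewrite /A mulmxKpV.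
have dA : \det A != 0.
  rewrite -unitfE -unitmxE -row_free_unit /row_free eqn_leq rank_leq_row /=.
  by rewrite -{1}(eqP fC') C'E mxrankM_maxl.
have dC : \det (C *m C^T) != 0 by rewrite det_gram_eq0 fC.
have gramE : C' *m C'^T = A *m (C *m C^T) *m A^T.
  by rewrite C'E trmx_mul !mulmxA.
have CvE : col_mx C' v = block_mx A 0 0 1%:M *m col_mx C v.
  by rewrite mul_block_col !mul0mx mul1mx addr0 add0r C'E.
have gramvE : col_mx C' v *m (col_mx C' v)^T =
    block_mx A 0 0 1%:M *m (col_mx C v *m (col_mx C v)^T) *m (block_mx A 0 0 1%:M)^T.
  by rewrite CvE trmx_mul !mulmxA.
rewrite /sqdist_rowspace gramE gramvE !det_mulmx !det_tr det_ublock det1 mulr1.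
by field; rewrite dA dC.
Qed.

End Gram.

Section AeDisjoint.
Local Open Scope ereal_scope.
Context d (T : measurableType d) (R : realType).
Variable mu : {measure set T -> \bar R}.

Lemma measure_setI_bigsetU_eq0 (I : eqType) (s : seq I) (Y : set T) (X : I -> set T) :
  measurable Y -> (forall t, t \in s -> measurable (X t)) ->
  (forall t, t \in s -> mu (Y `&` X t) = 0) ->
  mu (Y `&` \big[setU/set0]_(t <- s) X t) = 0.
Proof.
move=> mY; elim: s => [|a s IH] mX YX0; first by rewrite big_nil setI0 measure0.
have mXs t : t \in s -> measurable (X t) by move=> ts; apply: mX; rewrite inE ts orbT.
rewrite big_cons setIUr; apply: null_set_setU.
- by apply: measurableI => //; apply: mX; rewrite mem_head.
- by apply: measurableI => //; rewrite big_seq; apply: bigsetU_measurable.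
- by apply: YX0; rewrite mem_head.
- by apply: IH => // t ts; apply: YX0; rewrite inE ts orbT.
Qed.

Lemma measure_bigsetU_ae_disjoint (I : eqType) (s : seq I) (X : I -> set T) :
  uniq s -> (forall t, t \in s -> measurable (X t)) ->
  (forall t, t \in s -> mu (X t) < +oo) ->
  {in s &, forall t t', t != t' -> mu (X t `&` X t') = 0} ->
  mu (\big[setU/set0]_(t <- s) X t) = \sum_(t <- s) mu (X t).
Proof.
elim: s => [|a s IH] /=; first by rewrite !big_nil measure0.
move=> /andP[aNs us] mX finX dX.
have mXs t : t \in s -> measurable (X t) by move=> ts; apply: mX; rewrite inE ts orbT.
have mXa : measurable (X a) by apply: mX; rewrite mem_head.
have mU : measurable (\big[setU/set0]_(t <- s) X t).
  by rewrite big_seq; apply: bigsetU_measurable.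
rewrite !big_cons measureUfinl ?finX ?mem_head //.
rewrite measure_setI_bigsetU_eq0 // => [|t ts]; last first.
  by apply: dX; rewrite ?mem_head ?inE ?ts ?orbT //; apply: contraNneq aNs => ->.
rewrite sube0 IH // => [t ts|t t' ts t's]; first by apply: finX; rewrite inE ts orbT.
by apply: dX; rewrite inE ?ts ?t's orbT.
Qed.

Lemma lee_sum_lb_size (I : eqType) (s : seq I) (f : I -> \bar R) (e : R) :
  (forall t, t \in s -> e%:E <= f t) -> ((size s)%:R * e)%:E <= \sum_(t <- s) f t.
Proof.
elim: s => [|a s IH] ef; first by rewrite big_nil mul0r.
rewrite big_cons /= -addn1 natrD mulrDl mul1r EFinD addeC; apply: leeD.
  by apply: ef; rewrite mem_head.
by apply: IH => t ts; apply: ef; rewrite inE ts orbT.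
Qed.

Variables (I : choiceType) (D : set I) (A : I -> set T).
Hypothesis mA : forall i, D i -> measurable (A i).
Hypothesis A_ae_disjoint : forall i j, D i -> D j -> i != j -> mu (A i `&` A j) = 0.

Lemma ae_disjoint_finite (J : set I) (K : set T) (e : R) : J `<=` D ->
  (0 < e)%R -> measurable K -> mu K < +oo ->
  (forall i, J i -> e%:E < mu (A i `&` K)) -> finite_set J.
Proof.
move=> JD e0 mK Kfin AKe; apply: contrapT => /infinite_set_fset.
move=> /(_ (Num.truncn (fine (mu K) / e)).+1)[B BD cardB].
set s := enum_fset B.
have sD t : t \in s -> J t by move=> ts; apply: BD.
have mAK t : t \in s -> measurable (A t `&` K).
  by move=> /sD/JD Dt; apply: measurableI; auto.
have UK : \big[setU/set0]_(t <- s) (A t `&` K) `<=` K.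
  by elim/big_ind: _ => [x []|U V UK VK x [/UK|/VK]|t _ x []].
have AK_ae_disjoint :
    {in s &, forall t t', t != t' -> mu ((A t `&` K) `&` (A t' `&` K)) = 0}.
  move=> t t' ts t's tt'; apply: (subset_measure0 (mu := mu) (B := A t `&` A t')).
  - by apply: measurableI; apply: mAK.
  - by apply: measurableI; apply: mA; apply/JD/sD.
  - by move=> x [[? _] [? _]].
  - exact: A_ae_disjoint (JD _ (sD _ ts)) (JD _ (sD _ t's)) tt'.
have sum_le : \sum_(t <- s) mu (A t `&` K) <= mu K.
  have AKfin t : t \in s -> mu (A t `&` K) < +oo.
    move=> ts; apply: le_lt_trans Kfin.
    by apply: le_measure; rewrite ?in_setE //; apply: mAK.
  apply: (@le_trans _ _ (mu (\big[setU/set0]_(t <- s) (A t `&` K)))).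
    by rewrite measure_bigsetU_ae_disjoint ?fset_uniq.
  apply: le_measure UK; rewrite in_setE //.
  by rewrite big_seq; apply: bigsetU_measurable.
have sum_ge : ((size s)%:R * e)%:E <= \sum_(t <- s) mu (A t `&` K).
  by apply: lee_sum_lb_size => t /sD /AKe /ltW.
have Kfin' : mu K \is a fin_num by rewrite ge0_fin_numE.
have : ((size s)%:R * e <= fine (mu K))%R.
  by rewrite -lee_fin fineK //; apply: le_trans sum_ge sum_le.
rewrite -ler_pdivlMr // => se.
have Ns : ((Num.truncn (fine (mu K) / e)).+1%:R <= (size s)%:R :> R)%R by rewrite ler_nat.
by have := lt_le_trans (truncnS_gt _) (le_trans Ns se); rewrite ltxx.
Qed.

Lemma ae_disjoint_countable : sigma_finite setT mu ->
  (forall i, D i -> 0 < mu (A i)) -> countable D.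
Proof.
move=> [K KT mKfin] Apos.
have mK j : measurable (K j) by case: (mKfin j).
pose J (p : nat * nat) := [set i | D i /\ ((p.2.+1%:R)^-1)%:E < mu (A i `&` K p.1)].
have cover : D `<=` \bigcup_(p in setT) J p.
  move=> i Di; have mAi := mA Di.
  have [j AKj] : exists j, 0 < mu (A i `&` K j).
    apply: contrapT => /forallNP AK0.
    have : mu (A i) <= \sum_(j <oo) mu (A i `&` K j).
      apply: measure_sigma_subadditive => //; first by move=> n; apply: measurableI.
      move=> x Ax; have [j _ Kx] : (\bigcup_j K j) x by rewrite -KT.
      by exists j.
    rewrite eseries0 => [|j _ _]; first by rewrite leNgt Apos.
    by apply/eqP; rewrite eq_le measure_ge0 andbT leNgt; apply/negP/AK0.
  have AKfin : mu (A i `&` K j) \is a fin_num.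
    by rewrite ge0_fin_numE //; apply: le_lt_trans (proj2 (mKfin j)); apply: measureIr.
  move: AKj; rewrite -(fineK AKfin) lte_fin => /ltr_add_invr[k]; rewrite add0r => k_lt.
  by exists (j, k) => //; split; rewrite //= -(fineK AKfin) lte_fin.
apply: sub_countable (subset_card_le cover) _.
apply: bigcup_countable => [|[j k] _]; first exact: countableP.
apply/finite_set_countable/(ae_disjoint_finite (K := K j) (e := (k.+1%:R)^-1)).
- by move=> i [].
- by rewrite invr_gt0.
- exact: mK.
- by case: (mKfin j).
- by move=> i [].
Qed.

End AeDisjoint.

Lemma connected_countable_image_const (R : realType) (T : topologicalType)
  (H : set T) (f : T -> R) : connected H -> {within H, continuous f} ->
  countable (f @` H) -> forall x y, H x -> H y -> f x = f y.
Proof.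
move=> cH cf cfH; suff lt_const x y : H x -> H y -> ~ f x < f y.
  move=> x y Hx Hy; case: (ltgtP (f x) (f y)) => // fxy; exfalso.
    exact: lt_const Hx Hy fxy.
  exact: lt_const Hy Hx fxy.
move=> Hx Hy lt_xy.
have itv_sub : `[f x, f y] `<=` f @` H.
  move=> t; rewrite /= in_itv /= => /andP xty.
  have /connected_intervalP fH := connected_continuous_connected cH cf.
  by apply: fH; [exists x | exists y | apply/andP].
have := countable_lebesgue_measure0 (sub_countable (subset_card_le itv_sub) cfH).
rewrite lebesgue_measure_itv /= lte_fin lt_xy => /eqP.
by rewrite -EFinB eqe subr_eq0 gt_eqF.
Qed.

Section ASLGroup.
Variables (R : realType) (d m : nat).
Local Notation Amb := (Amb R d m).

Lemma Gamma1 : Gamma (@aslone R d m).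
Proof.
split; first by rewrite /= det1.
split=> [i j|j]; rewrite !mxE /=; last exact: rpred0.
by case: (i == j); rewrite ?rpred1 ?rpred0.
Qed.

Lemma asl_mul1g (h : Amb) : aslmul (@aslone R d m) h = h.
Proof. by case: h => a b; rewrite /aslmul /= mul1mx mul0mx add0r. Qed.

Lemma asl_mulKg (x h : Amb) : \det x.1 = 1 -> aslmul (aslinv x) (aslmul x h) = h.
Proof.
move=> /unitmx_det1 ux; case: h => h1 h2; rewrite /aslmul /aslinv /=.
congr (_, _); first by rewrite mulmxA mulVmx // mul1mx.
by rewrite mulNmx -(mulmxA _ (invmx x.1)) mulKmx // addrA addNr add0r.
Qed.

Lemma closed_measurable (A : set Amb) : closed A -> measurable (A : set (BorelA R d m)).
Proof.
move=> cA; rewrite -[A]setCK; apply: measurableC.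
by apply: sub_sigma_algebra; apply: closed_openC.
Qed.

Definition cube (j : nat) : set Amb :=
  [set x : Amb | (forall a b, `[- j%:R, j%:R]%classic (x.1 a b)) /\
                 (forall b, `[- j%:R, j%:R]%classic (x.2 0 b))].

Lemma cube_compact j : compact (cube j).
Proof.
have cI : compact (`[- j%:R, j%:R]%classic : set R) by exact: segment_compact.
have -> : cube j = (vec_mx @` [set v : 'rV[R]_((d + m) * (d + m)) |
                       forall i, `[- j%:R, j%:R]%classic (v 0 i)]) `*`
                   [set v : 'rV[R]_(d + m) | forall b, `[- j%:R, j%:R]%classic (v 0 b)].
  apply/seteqP; split=> -[M v] /= [M_j v_j]; split=> //.
    exists (mxvec M); last by rewrite mxvecK.
    by move=> i; case/mxvec_indexP: i => a b; rewrite mxvecE; apply: M_j.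
  by case: M_j => u u_j <- a b; rewrite mxE; apply: u_j.
apply: compact_setX; last exact: (rV_compact (fun=> cI)).
apply: continuous_compact; last exact: (rV_compact (fun=> cI)).
apply: continuous_subspaceT => u A /nbhs_ballP[e /= e0 eA].
apply/nbhs_ballP; exists e => //= v [_ uv]; apply: eA; split => // i j'.
by rewrite !mxE; apply: uv.
Qed.

Lemma cube_cover (x : Amb) : exists j, cube j x.
Proof.
set S1 := \sum_a \sum_b `|x.1 a b|; set S2 := \sum_b `|x.2 0 b|.
have le_sum (I : finType) (F : I -> R) i : (forall i, 0 <= F i) -> F i <= \sum_i F i.
  by move=> F0; rewrite (bigD1 i) //= lerDl sumr_ge0.
have S1_ge0 : 0 <= S1 by apply: sumr_ge0 => a _; apply: sumr_ge0.
have S2_ge0 : 0 <= S2 by apply: sumr_ge0.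
have x1_le a b : `|x.1 a b| <= S1 + S2.
  apply: (@le_trans _ _ S1); last by rewrite lerDl.
  apply: le_trans (le_sum _ (fun b => `|x.1 a b|) b _) _ => // .
  by apply: (le_sum _ (fun a => \sum_b `|x.1 a b|)) => a'; apply: sumr_ge0.
have x2_le b : `|x.2 0 b| <= S1 + S2.
  by apply: (@le_trans _ _ S2); [exact: le_sum | rewrite lerDr].
exists (Num.truncn (S1 + S2)).+1; split=> [a b|b]; rewrite /= in_itv /= -ler_norml;
  apply: le_trans (ltW (truncnS_gt _)); [exact: x1_le | exact: x2_le].
Qed.

Lemma left_haar_sigma_finite (H : set Amb) (mu : {measure set (BorelA R d m) -> \bar R}) :
  is_left_haar H mu -> sigma_finite setT mu.
Proof.
move=> [_ [_ [mu_cpt _]]]; exists cube.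
  by apply/seteqP; split=> x // _; have [j] := cube_cover x; exists j.
move=> j; split; last exact/mu_cpt/cube_compact.
have hA : hausdorff_space Amb by exact: norm_hausdorff.
by apply: closed_measurable; exact: (compact_closed hA (@cube_compact j)).
Qed.

End ASLGroup.

Section CoordsStab.
Variables (R : realType) (d m : nat).
Local Notation n := (d + m)%N.
Local Notation Amb := (Amb R d m).
Local Notation Zn := (@Zn R d m).
Local Notation zeroRm := (@zeroRm R d m).

Definition zeroRm_coords (g : Amb) : set 'rV[R]_n := [set w | Zn w /\ zeroRm (w *m g.1)].

Definition coords_stab (g : Amb) : set Amb :=
  [set x | \det x.1 = 1 /\ forall w, zeroRm_coords g w -> Zn (w *m \adj x.1)].

Lemma closed_coords_stab g : closed (coords_stab g).
Proof.
have -> : coords_stab g = (fun x : Amb => \det x.1) @^-1` [set 1] `&`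
    \bigcap_(w in zeroRm_coords g) \bigcap_(j in setT)
      (fun x : Amb => (w *m \adj x.1) 0 j) @^-1` [set z | z \is a Num.int].
  apply/seteqP; split=> x /= [dx Zx]; split=> //; first by move=> w wg j _; apply: Zx.
  by move=> w wg j; apply: Zx.
apply: closedI.
  have cdet := continuous_det (@mx_continuous_fst R n n 1 n).
  exact: (continuous_closedP _).1 cdet _ (@closed_eq _ 1).
apply: closed_bigI => w _; apply: closed_bigI => j _.
apply: (continuous_closedP _).1 (@closed_int R).
have := mx_continuous_adj (@mx_continuous_fst R n n 1 n).
by move/(mx_continuous_mul (mx_continuous_cst (A := w))); apply.
Qed.

Lemma zeroRm_mul_block (v : 'rV[R]_n) (A : 'M[R]_d) :
  zeroRm v -> v *m block_mx A 0 0 1%:M = v.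
Proof.
move=> v0; rewrite -[v]hsubmxK.
have -> : lsubmx v = 0 by apply/rowP => i; rewrite !mxE; apply: v0; rewrite /= ltn_ord.
by rewrite mul_row_block !mul0mx !mulmx0 !addr0 add0r mulmx1.
Qed.

Lemma Gamma_phiSL_sub_coords_stab (g : Amb) :
  inG g -> setmulA (@Gamma R d m) (phiSL g) `<=` coords_stab g.
Proof.
move=> g_G _ [[ga p] [Gga [A dA <-]] <-] /=.
have [dga [Zga _]] := Gga.
set P := g.1 *m block_mx A 0 0 1%:M *m invmx g.1.
have dP : \det P = 1.
  by rewrite !det_mulmx det_inv det_ublock dA det1 g_G invr1 !mulr1.
have dx : \det (ga.1 *m P) = 1 by rewrite det_mulmx dga dP mulr1.
split=> // w [Zw wg].
have wP : w *m P = w by rewrite /P !mulmxA zeroRm_mul_block // mulmxK // unitmx_det1.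
have wE : w = w *m invmx ga.1 *m (ga.1 *m P) by rewrite mulmxA mulmxKV ?unitmx_det1.
rewrite {1}wE adj_det1 // mulmxK ?unitmx_det1 // -adj_det1 // => j.
by apply: int_mulmx => [a b|]; [rewrite ord1; apply: Zw | apply: int_adj Zga].
Qed.

Lemma Hg_sub_coords_stab g (H : set Amb) : inG g -> is_Hg g H -> H `<=` coords_stab g.
Proof.
move=> g_G [_ [_ [_ [_ [_ GH]]]]] h Hh.
have : setmulA (@Gamma R d m) H h.
  by exists (@aslone R d m, h); [split=> //; apply: Gamma1 | apply: asl_mul1g].
rewrite -GH => /(closureS (Gamma_phiSL_sub_coords_stab g_G)).
by rewrite -(proj1 (closure_id _) (closed_coords_stab (g := g))).
Qed.

Lemma lat0_ZngP (g : Amb) v : lat0 (Zng g) v <-> exists2 w, Zn w & v = w *m g.1.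
Proof.
split=> [[_ [y Zy <-] [_ [y' Zy' <-] <-]]|[w Zw ->]].
  exists (y - y'); first by move=> j; rewrite !mxE; apply: rpredB.
  by rewrite /actA mulmxBl opprD addrACA subrr addr0.
exists (actA w g); first by exists w.
exists (actA 0 g); first by exists 0 => // j; rewrite mxE rpred0.
by rewrite /actA mul0mx add0r addrK.
Qed.

Lemma coords_stab_lat0_sub g h : coords_stab g h ->
  lat0 (Zng g) `&` zeroRm `<=` lat0 (Zng (aslmul h g)) `&` zeroRm.
Proof.
move=> [dh Sh] v [/lat0_ZngP[w Zw ->] wg]; split=> //; apply/lat0_ZngP.
exists (w *m \adj h.1); first exact: Sh.
by rewrite /= mulmxA -(mulmxA w) mul_adj_mx dh mulmx1.
Qed.

End CoordsStab.

Section HaarSubspace.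
Variables (R : realType) (d m : nat).
Local Notation n := (d + m)%N.
Local Notation Amb := (Amb R d m).
Local Notation lmx X := (lin_mulmx (p := n) X).

Variable H : set Amb.
Hypothesis H_subgroup : is_subgroupG H.

Let Hdet x : H x -> \det x.1 = 1. Proof. by case: H_subgroup => sHG _ /sHG. Qed.
Let H1 : H (@aslone R d m). Proof. by case: H_subgroup => _ []. Qed.
Let HM x y : H x -> H y -> H (aslmul x y).
Proof. by case: H_subgroup => _ [_ [HM _]]; apply: HM. Qed.
Let HV x : H x -> H (aslinv x). Proof. by case: H_subgroup => _ [_ [_ HV]]; apply: HV. Qed.
Let Hunit x : H x -> x.1 \in unitmx. Proof. by move/Hdet/unitmx_det1. Qed.

Definition Hcap k (F : 'M[R]_(k, n * n)) : set Amb := [set h | H h /\ (mxvec h.1 <= F)%MS].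

(* The space x.1^-1 F, see [sub_mulV_space]. *)
Definition mulV_space k (F : 'M[R]_(k, n * n)) (x : Amb) := F *m lmx (invmx x.1).

Lemma sub_mulV_space k (F : 'M[R]_(k, n * n)) x M : H x ->
  (mxvec M <= mulV_space F x)%MS = (mxvec (x.1 *m M) <= F)%MS.
Proof. by move=> Hx; apply: submx_lin_mulmxV; apply: Hunit. Qed.

Lemma mxrank_mulV_space k (F : 'M[R]_(k, n * n)) x :
  H x -> \rank (mulV_space F x) = \rank F.
Proof. by move=> Hx; apply: mxrank_lin_mulmxV; apply: Hunit. Qed.

Lemma Hcap_mulV_space k (F : 'M[R]_(k, n * n)) x : H x ->
  aslmul (aslinv x) @` Hcap F = Hcap (mulV_space F x).
Proof.
move=> Hx; apply/seteqP; split=> [_ [y [Hy yF] <-]|y [Hy yF]].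
  by split; [apply: HM; first apply: HV | rewrite sub_mulV_space //= mulKVmx ?Hunit].
exists (aslmul x y); last by rewrite asl_mulKg ?Hdet.
by split; [apply: HM | rewrite -sub_mulV_space].
Qed.

Lemma Hcap_capmx k1 k2 (F : 'M[R]_(k1, n * n)) (G : 'M[R]_(k2, n * n)) :
  Hcap F `&` Hcap G = Hcap (F :&: G)%MS.
Proof.
apply/seteqP; split=> h /=.
  by move=> [[Hh hF] [_ hG]]; split=> //; rewrite sub_capmx hF hG.
by move=> [Hh]; rewrite sub_capmx => /andP[hF hG].
Qed.

Lemma exists_separating_invariant k (F : 'M[R]_(k, n * n)) x0 :
  H x0 -> ~~ (F <= mulV_space F x0)%MS ->
  exists psi : Amb -> R, [/\ {within H, continuous psi},
    forall x y, H x -> H y -> (mulV_space F x == mulV_space F y)%MS -> psi x = psi y &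
    psi (@aslone R d m) != psi x0].
Proof.
move=> Hx0 nF; have [i nvi] : exists i, ~~ (row i F <= mulV_space F x0)%MS.
  apply: contrapT => /forallNP ri; case/negP: nF.
  by apply/row_subP => i; apply/negPn/negP => /ri.
set v := row i F; set C := row_base F.
pose Cx (x : Amb) := C *m lmx (\adj x.1).
have CxE x : H x -> Cx x = C *m lmx (invmx x.1) by move=> Hx; rewrite /Cx adj_det1 ?Hdet.
have Cx_free x : H x -> row_free (Cx x).
  move=> Hx; rewrite CxE // /row_free mxrankMfree; first exact: row_base_free.
  by rewrite row_free_unit lin_mulmx_unit // unitmx_inv Hunit.
have Cx_eqmx x : H x -> (Cx x :=: mulV_space F x)%MS.
  by move=> Hx; rewrite CxE //; apply/eqmxMr/eq_row_base.
exists (fun x => sqdist_rowspace (Cx x) v); split.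
- have cCx : mx_continuous Cx.
    exact: mx_continuous_mul (mx_continuous_cst (A := C))
      (mx_continuous_lin_mulmx (mx_continuous_adj (@mx_continuous_fst R n n 1 n))).
  have cgram p (X : Amb -> 'M[R]_(p, n * n)) : mx_continuous X ->
      continuous (fun x => \det (X x *m (X x)^T)).
    by move=> cX; apply/continuous_det/mx_continuous_mul/mx_continuous_tr.
  apply: continuous_in_subspaceT => x; rewrite in_setE => Hx.
  have den0 : \det (Cx x *m (Cx x)^T) != 0 by rewrite det_gram_eq0 negbK Cx_free.
  apply: (@continuousM R Amb (fun y => \det (col_mx (Cx y) v *m (col_mx (Cx y) v)^T))).
    exact: (cgram _ _ (mx_continuous_col cCx (mx_continuous_cst (A := v))) x).
  exact: (@continuousV R Amb (fun y => \det (Cx y *m (Cx y)^T)) x den0 (cgram _ _ cCx x)).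
- move=> x y Hx Hy /eqmxP xy; apply: eqmx_sqdist_rowspace; try exact: Cx_free.
  apply/eqmxP; apply: eqmx_trans (Cx_eqmx _ Hx) _.
  exact: eqmx_trans xy (eqmx_sym (Cx_eqmx _ Hy)).
- have psi1 : sqdist_rowspace (Cx (@aslone R d m)) v = 0.
    apply/eqP; rewrite sqdist_rowspace_eq0 ?Cx_free // (Cx_eqmx _ H1).
    by rewrite /mulV_space /= invmx1 lin_mulmx1 mulmx1 row_sub.
  by rewrite psi1 eq_sym sqdist_rowspace_eq0 ?Cx_free // (Cx_eqmx _ Hx0).
Qed.

Hypothesis H_closed : closed H.
Hypothesis H_connected : connected H.
Variable mu : {measure set (BorelA R d m) -> \bar R}.
Hypothesis mu_haar : is_left_haar H mu.

Lemma measurable_Hcap k (F : 'M[R]_(k, n * n)) : measurable (Hcap F : set (BorelA R d m)).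
Proof.
apply: closed_measurable.
have -> : Hcap F = H `&` \bigcap_(j in setT)
    (fun h : Amb => (mxvec h.1 *m cokermx F) 0 j) @^-1` [set 0].
  apply/seteqP; split=> h /= [Hh hF]; split=> //.
    by move=> j _; rewrite /preimage /=; move: hF; rewrite submxE => /eqP ->; rewrite mxE.
  by rewrite submxE; apply/eqP/rowP => j; rewrite hF // mxE.
apply: closedI => //; apply: closed_bigI => j _.
apply: (continuous_closedP _).1 (@closed_eq _ 0).
have := mx_continuous_mul (mx_continuous_mxvec (@mx_continuous_fst R n n 1 n))
  (mx_continuous_cst (A := cokermx F)).
by apply.
Qed.

Lemma mu_Hcap_mulV_space k (F : 'M[R]_(k, n * n)) x :
  H x -> mu (Hcap (mulV_space F x)) = mu (Hcap F).
Proof.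
move=> Hx; have [_ [mu_linv _]] := mu_haar.
by rewrite -Hcap_mulV_space //; apply: mu_linv; [exact: HV | exact: measurable_Hcap].
Qed.

Section MinimalSubspace.
Variables (k : nat) (F : 'M[R]_(k, n * n)).
Hypothesis F_pos : (0 < mu (Hcap F))%E.
Hypothesis F_min : forall k' (G : 'M[R]_(k', n * n)),
  (0 < mu (Hcap G))%E -> (\rank F <= \rank G)%N.

Lemma Hcap_mulV_space_ae_disjoint x y : H x -> H y ->
  ~~ (mulV_space F x == mulV_space F y)%MS ->
  mu (Hcap (mulV_space F x) `&` Hcap (mulV_space F y)) = 0%E.
Proof.
move=> Hx Hy nxy; apply/eqP; rewrite eq_le measure_ge0 andbT leNgt Hcap_capmx.
apply/negP => /F_min; rewrite -(mxrank_mulV_space F Hx) => /capmx_rank_sub sxy.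
by case/negP: nxy; rewrite -(mxrank_leqif_eq sxy).2 !mxrank_mulV_space.
Qed.

Lemma mulV_space_eqmx x0 : H x0 -> (mulV_space F x0 == F)%MS.
Proof.
move=> Hx0; apply: contraT => neq.
have nF : ~~ (F <= mulV_space F x0)%MS.
  apply: contra neq => sF; have := (mxrank_leqif_eq sF).2.
  by rewrite mxrank_mulV_space // eqxx => /esym/andP[_ xF]; apply/andP.
have [psi [cpsi psi_inv psi_sep]] := exists_separating_invariant Hx0 nF.
case/negP: psi_sep; apply/eqP.
apply: (connected_countable_image_const H_connected cpsi) => //.
have pre t : exists y, (psi @` H) t -> H y /\ psi y = t.
  by case: (pselect ((psi @` H) t)) => [[y Hy <-]|nt]; [exists y | exists x0].
have [xt xtP] := choice pre.
apply: (@ae_disjoint_countable _ _ _ mu _ (psi @` H) (fun t => Hcap (mulV_space F (xt t)))).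
- by move=> t _; apply: measurable_Hcap.
- move=> s t Hs Ht st; have [Hxs psis] := xtP s Hs; have [Hxt psit] := xtP t Ht.
  apply: Hcap_mulV_space_ae_disjoint => //; apply: contra st => /psi_inv.
  by rewrite psis psit => -> //; apply/eqP.
- exact: left_haar_sigma_finite mu_haar.
- by move=> t Ht; have [Hxt _] := xtP t Ht; rewrite mu_Hcap_mulV_space.
Qed.

End MinimalSubspace.

Lemma Hcap_pos_sub k (E : 'M[R]_(k, n * n)) : (0 < mu (Hcap E))%E ->
  forall h, H h -> (mxvec h.1 <= E)%MS.
Proof.
move=> E_pos.
pose P r := `[< exists k' (F : 'M[R]_(k', n * n)), (0 < mu (Hcap F))%E /\ \rank F = r >].
have [|r /asboolP[k' [F [F_pos rF]]] r_min] := ex_minnP (_ : exists r, P r).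
  by exists (\rank E); apply/asboolP; exists k, E.
have F_min k'' (G : 'M[R]_(k'', n * n)) : (0 < mu (Hcap G))%E -> (\rank F <= \rank G)%N.
  by move=> G_pos; rewrite rF; apply: r_min; apply/asboolP; exists k'', G.
have [y [Hy yF]] : exists y, Hcap F y.
  apply: contrapT => /forallNP F0; move: F_pos.
  by rewrite (_ : Hcap F = set0) ?measure0 ?ltxx //; apply/seteqP; split=> x // /F0.
have HF x : H x -> (mxvec x.1 <= F)%MS.
  move=> Hx; have /andP[_ sFx] := mulV_space_eqmx F_pos F_min Hx.
  have /andP[sFy _] := mulV_space_eqmx F_pos F_min Hy.
  have one_F : (mxvec (1%:M : 'M[R]_n) <= F)%MS.
    by apply: submx_trans sFy; rewrite sub_mulV_space // mulmx1.
  by move: (submx_trans one_F sFx); rewrite sub_mulV_space // mulmx1.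
have FE_pos : (0 < mu (Hcap (F :&: E)%MS))%E.
  rewrite -Hcap_capmx (_ : Hcap F `&` Hcap E = Hcap E) //.
  by apply/seteqP; split=> x; [case | move=> [Hx xE]; split=> //; split=> //; apply: HF].
move=> h Hh; exact: submx_trans (HF h Hh) (capmx_rank_sub (F_min _ _ FE_pos)).
Qed.

End HaarSubspace.

Lemma negligible_bigcup_countType d (T : measurableType d) (R : realType)
  (mu : {measure set T -> \bar R}) (I : countType) (F : I -> set T) :
  (forall i, mu.-negligible (F i)) -> mu.-negligible (\bigcup_(i in setT) F i).
Proof.
move=> F0; pose G k := if choice.unpickle k is Some i then F i else set0.
apply: (negligibleS _ (negligible_bigcup (F := G) _)).
  by move=> x [i _ Fix]; exists (choice.pickle i) => //; rewrite /G choice.pickleK.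
move=> k; rewrite /G; case: choice.unpickle => [i|]; first exact: F0.
exact: negligible_set0.
Qed.

Section ZeroRmSpace.
Variables (R : realType) (d m : nat).
Local Notation n := (d + m)%N.
Local Notation Amb := (Amb R d m).
Local Notation zeroRm := (@zeroRm R d m).

Lemma zeroRmP (v : 'rV[R]_n) : zeroRm v <-> lsubmx v = 0.
Proof.
split=> [v0|v0 i lt_id].
  by apply/rowP => j; rewrite !mxE; apply: v0; rewrite /= ltn_ord.
have -> : i = lshift m (Ordinal lt_id) by apply/val_inj.
by move/rowP: v0 => /(_ (Ordinal lt_id)); rewrite !mxE.
Qed.

Definition zeroRm_mxspace (g : Amb) (w : 'rV[R]_n) : 'M[R]_(n * n) :=
  kermx (lin_mx (mulmx w) *m lin_mx (mulmxr (g.1 *m col_mx (1%:M : 'M[R]_d) 0))).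

Lemma sub_zeroRm_mxspace (g : Amb) w (M : 'M[R]_n) :
  (mxvec M <= zeroRm_mxspace g w)%MS <-> zeroRm (w *m M *m g.1).
Proof.
rewrite /zeroRm_mxspace sub_kermx mulmxA !mul_vec_lin mxvec_eq0 /= zeroRmP.
have -> : w *m M *m (g.1 *m col_mx 1%:M 0) = lsubmx (w *m M *m g.1).
  by rewrite mulmxA -{1}[w *m M *m g.1]hsubmxK mul_row_col mulmx1 mulmx0 addr0.
by split=> [/eqP|->].
Qed.

Lemma Zn_int_rV (w : 'rV[R]_n) : @Zn R d m w -> exists z : 'rV[int]_n, w = map_mx intr z.
Proof.
by move=> Zw; exists (map_mx Num.floor w); apply/rowP => j; rewrite !mxE floorK ?Zw.
Qed.

End ZeroRmSpace.

Section LatticeAe.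
Variables (R : realType) (d m : nat).
Local Notation n := (d + m)%N.
Local Notation Amb := (Amb R d m).
Local Notation zeroRm := (@zeroRm R d m).

Variables (g : Amb) (H : set Amb).
Hypotheses (g_G : inG g) (H_Hg : is_Hg g H).
Variable mu : {measure set (BorelA R d m) -> \bar R}.
Hypothesis mu_haar : is_left_haar H mu.

Let H_subgroup : is_subgroupG H. Proof. by case: H_Hg. Qed.

Let exceptional (z : 'rV[int]_n) : set Amb :=
  let w := map_mx intr z in
  [set h | ~ zeroRm (w *m g.1) /\ Hcap H (zeroRm_mxspace g w) h].

Let negligible_exceptional z : mu.-negligible (exceptional z).
Proof.
case: (pselect (zeroRm (map_mx intr z *m g.1))) => wg.
  by apply: (negligibleS (A := set0)); [move=> h [] | exact: negligible_set0].
apply: (negligibleS (A := Hcap H (zeroRm_mxspace g (map_mx intr z)) : set (BorelA R d m))).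
  by move=> h [].
have [_ [H_closed [H_connected _]]] := H_Hg.
apply/negligibleP; first exact: measurable_Hcap.
apply/eqP; rewrite eq_le measure_ge0 andbT leNgt; apply/negP => pos.
have := Hcap_pos_sub H_subgroup H_closed H_connected mu_haar pos.
case: H_subgroup => _ [H1 _] /(_ _ H1) /sub_zeroRm_mxspace.
by rewrite mulmx1.
Qed.

Lemma lat0_zeroRm_ae_eq : mu.-negligible
  [set h | H h /\ lat0 (Zng (aslmul h g)) `&` zeroRm <> lat0 (Zng g) `&` zeroRm].
Proof.
apply: negligibleS (negligible_bigcup_countType negligible_exceptional).
move=> h [Hh neq].
have [v [vhg nvg]] : exists v, (lat0 (Zng (aslmul h g)) `&` zeroRm) v /\
    ~ (lat0 (Zng g) `&` zeroRm) v.
  apply: contrapT => /forallNP nv; apply: neq; apply/seteqP; split.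
    by move=> x xhg; apply: contrapT => nx; apply: (nv x).
  exact: coords_stab_lat0_sub (Hg_sub_coords_stab g_G H_Hg Hh).
case: vhg nvg => /lat0_ZngP[w Zw ->] /= whg nvg.
have [z wz] := Zn_int_rV Zw.
have [wg|nwg] := pselect (zeroRm (w *m g.1)); last first.
  exists z => //; rewrite /exceptional -wz; split=> //; split=> //.
  by apply/sub_zeroRm_mxspace; rewrite -mulmxA.
exfalso; apply: nvg; split=> //; apply/lat0_ZngP.
exists (w *m h.1); last by rewrite /= mulmxA.
have Hhinv : H (aslinv h) by case: H_subgroup => _ [_ [_]]; apply.
have [dhinv stab] := Hg_sub_coords_stab g_G H_Hg Hhinv.
by move: (stab w (conj Zw wg)); rewrite adj_det1 //= invmxK.
Qed.

End LatticeAe.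

Theorem proposition3p6 (R : realType) (d m : nat) (g : Amb R d m)
  (H : set (Amb R d m)) :
  inG g -> is_Hg g H ->
  (forall h, H h ->
     lat0 (Zng g) `&` @zeroRm R d m `<=` lat0 (Zng (aslmul h g)) `&` @zeroRm R d m)
  /\
  (forall mu : {measure set (BorelA R d m) -> \bar R}, is_left_haar H mu ->
     mu.-negligible
       [set h | H h /\
          lat0 (Zng (aslmul h g)) `&` @zeroRm R d m <> lat0 (Zng g) `&` @zeroRm R d m]).
Proof.
move=> g_G H_Hg; split=> [h Hh|mu mu_haar].
  exact: coords_stab_lat0_sub (Hg_sub_coords_stab g_G H_Hg Hh).
exact: lat0_zeroRm_ae_eq.
Qed.
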